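(* Let $n\ge 2$, $n\ge d\ge 1$, let $\{\tilde V(\theta):\theta\in\Theta\}$ be an ORP of $O(d+1)$ to $e_{d+1}$ and $\{\tilde V_d(\phi):\phi\in\Phi\}$ an ORP of $O(d)$ to $e_d$, with $V^{(k)}$ defined below. Let $\gamma\in\mathbb{R}$ with $|\gamma|\le 1$, $\theta_1,\dots,\theta_{n-1}\in\Theta$, $\theta_n\in\Phi$. Define the $(d-1)\times n$ matrix $\hat C$ and the $n\times n$ matrix $A$ by $$\begin{pmatrix}\hat C\\ A\end{pmatrix}=V^{(1)}(\theta_1)\cdots V^{(n-1)}(\theta_{n-1})V^{(n)}(\theta_n)\begin{pmatrix}0_{d-1,n}\\ P(\gamma)\end{pmatrix},$$ where $P(\gamma)$ is the $n\times n$ matrix with $P_{2,1}=\gamma$, $P_{k+1,k}=1$ for $2\le k<n$, $P_{1,n}=1$ and all other entries $0$, and let $C$ be the $d\times n$ matrix with first row $C_{1,j}=\sqrt{1-\gamma^2}\,\delta_{1,j}$ and rows $2,\dots,d$ equal to $\hat C$. Then $(A,C)$ is a HOON pair.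
   Context: ${}^*$ denotes transpose. $(A,C)$ is HOON if $A$ is upper Hessenberg ($A_{i,j}=0$ for $i>j+1$), $C_{1,j}=0$ for $j>1$, and $A^*A=\mathbb{I}_n-C^*C$. An orthogonal reduction parameterization (ORP) of $O(m)$ to $e_k$ is a family $\{\tilde Q(\theta):\theta\in\Theta\}$, $\Theta\subset\mathbb{R}^{m-1}$, of real orthogonal $m\times m$ matrices such that for every nonzero $h\in\mathbb{R}^m$ there is a unique $\theta(h)$ with $\tilde Q(\theta)^*h=\|h\|e_k$. For $\theta\in\Theta$ write $\tilde V(\theta)=\begin{pmatrix}\tilde O&x\\ y^*&\mu\end{pmatrix}$ ($\tilde O\in\mathbb{R}^{d\times d}$, $x,y\in\mathbb{R}^d$, $\mu\in\mathbb{R}$) and for $1\le k<n$ set $V^{(k)}(\theta)=\begin{pmatrix}\tilde O&0_{d,k-1}&x\\ 0_{k-1,d}&\mathbb{I}_{k-1}&0_{k-1,1}\\ y^*&0_{1,k-1}&\mu\end{pmatrix}\oplus\mathbb{I}_{n-k-1}$, an $(n+d-1)\times(n+d-1)$ matrix; set $V^{(n)}(\phi)=\tilde V_d(\phi)\oplus\mathbb{I}_{n-1}$. *)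

From HB Require Import structures.
From mathcomp Require Import all_boot all_order all_algebra.
From mathcomp Require Import reals.
Set Implicit Arguments. Unset Strict Implicit. Unset Printing Implicit Defensive.
Import Order.TTheory GRing.Theory Num.Theory.
Local Open Scope ring_scope.

Section Defs.
Variable R : realType.

(* entry (i,j) (0-based nat indices) of a matrix, 0 outside the range *)
Definition mxe (p q : nat) (M : 'M[R]_(p, q)) (i j : nat) : R :=
  match (insub i : option 'I_p), (insub j : option 'I_q) with
  | Some a, Some b => M a b
  | _, _ => 0
  end.

Definition vnorm (m : nat) (h : 'cV[R]_m) : R := Num.sqrt (\sum_i h i 0 ^+ 2).

(* e_k (1-based k) in R^m *)
Definition evec (m k : nat) : 'cV[R]_m := \col_(i < m) ((i : nat) == k.-1)%:R.

Definition orthogonal_mx (m : nat) (Q : 'M[R]_m) : Prop := Q^T *m Q = 1%:M.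

Definition ORP (m k : nat) (Theta : 'cV[R]_(m.-1) -> Prop)
    (Q : 'cV[R]_(m.-1) -> 'M[R]_m) : Prop :=
  (forall t, Theta t -> orthogonal_mx (Q t)) /\
  (forall h : 'cV[R]_m, h != 0 ->
     exists t, [/\ Theta t, (Q t)^T *m h = vnorm h *: evec m k &
       forall t', Theta t' -> (Q t')^T *m h = vnorm h *: evec m k -> t' = t]).

Definition HOON (n m : nat) (A : 'M[R]_n) (C : 'M[R]_(m, n)) : Prop :=
  [/\ (forall i j : 'I_n, (j.+1 < i)%N -> A i j = 0),
      (forall (i : 'I_m) (j : 'I_n), (i : nat) = 0%N -> (0 < j)%N -> C i j = 0) &
      A^T *m A = 1%:M - C^T *m C].

(* index map of the embedding of ~V (size d+1) into V^(k) (size n+d-1):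
   0-based rows 0..d-1 -> O-block, row d+k-1 -> last row/col of ~V *)
Definition vkidx (d k i : nat) : option nat :=
  if (i < d)%N then Some i else if i == (d + k).-1 then Some d else None.

(* V^(k)(theta), 1 <= k < n, given Vt = ~V(theta); entrywise form of the
   block matrix of the paper *)
Definition Vk (d n k : nat) (Vt : 'M[R]_(d.+1)) : 'M[R]_(d.-1 + n) :=
  \matrix_(i, j)
    match vkidx d k i, vkidx d k j with
    | Some a, Some b => mxe Vt a b
    | _, _ => ((i : nat) == j)%:R
    end.

Definition Vn (d n : nat) (Vd : 'M[R]_d) : 'M[R]_(d.-1 + n) :=
  \matrix_(i, j)
    if ((i < d) && (j < d))%N then mxe Vd i j else ((i : nat) == j)%:R.

(* P(gamma); 1-based: P_{2,1} = gamma, P_{k+1,k} = 1 (2<=k<n), P_{1,n} = 1 *)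
Definition Pmat (n : nat) (gamma : R) : 'M[R]_n :=
  \matrix_(i, j)
    if ((i : nat) == 1%N) && ((j : nat) == 0%N) then gamma
    else if ((2 <= i)%N && ((j : nat) == i.-1)) then 1
    else if ((i : nat) == 0%N) && ((j : nat) == n.-1) then 1
    else 0.

Definition Crow (n : nat) (gamma : R) : 'rV[R]_n :=
  \row_(j < n) (if (j : nat) == 0%N then Num.sqrt (1 - gamma ^+ 2) else 0).

End Defs.
Arguments ORP {R} m k Theta Q.

From HB Require Import structures.
From mathcomp Require Import all_boot all_order all_algebra.
From mathcomp Require Import reals.
From mathcomp Require Import zify.
Set Implicit Arguments.
Unset Strict Implicit.
Unset Printing Implicit Defensive.
Import Order.TTheory GRing.Theory Num.Theory.
Local Open Scope ring_scope.

(* Every factor V^(k), V^(n) is an orthogonal matrix that is the identity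
   outside a principal submatrix, so W := V^(1) ... V^(n-1) V^(n) is
   orthogonal and M^T M = P^T P = diag(gamma^2, 1, ..., 1) = I - c^T c, where
   c is the first row of C; splitting the rows of M gives A^T A = I - C^T C.
   Since V^(k) only mixes the first d coordinates with coordinate d+k-1, and
   these extra coordinates increase with k, W has no entry strictly below the
   diagonal in the columns >= d. As column j of P is a multiple of e_(j+1 mod n),
   A = (lower right block of W) * P is upper Hessenberg. *)

Lemma col_mulmx (R : pzSemiRingType) m n p (A : 'M[R]_(m, n)) (B : 'M_(n, p)) j :
  col j (A *m B) = A *m col j B.
Proof. by rewrite !colE mulmxA. Qed.

Lemma colsub_inj_gram (R : pzSemiRingType) m n (f : 'I_m -> 'I_n) :
  injective f -> (colsub f (1%:M : 'M[R]_n))^T *m colsub f 1%:M = 1%:M.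
Proof.
move=> f_inj; rewrite trmx_mxsub trmx1 -mxsub_mul mul1mx.
by apply/matrixP => i j; rewrite !mxE (inj_eq f_inj).
Qed.

Lemma gram_col_split (R : pzRingType) p n (M : 'M[R]_(p + n, n)) (c : 'rV_n) :
    M^T *m M + c^T *m c = 1%:M ->
  (dsubmx M)^T *m dsubmx M = 1%:M - (col_mx c (usubmx M))^T *m col_mx c (usubmx M).
Proof.
move=> <-; rewrite -[in M^T *m M](vsubmxK M) !tr_col_mx !mul_row_col.
by rewrite opprD addrA addrK addrC addKr.
Qed.

Section PartialEmbedding.
Variables (R : pzRingType) (m N : nat) (g : 'I_N -> option 'I_m).
Hypothesis g_inj : forall i j a, g i = Some a -> g j = Some a -> i = j.
Hypothesis g_surj : forall a, exists i, g i = Some a.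

Definition embed_mx (U : 'M[R]_m) : 'M[R]_N :=
  \matrix_(i, j) match g i, g j with
                 | Some a, Some b => U a b
                 | _, _ => (i == j)%:R
                 end.

Lemma sum_oapp_partial_bij (F : 'I_m -> R) : \sum_i oapp F 0 (g i) = \sum_a F a.
Proof.
have [f fK] := fin_all_exists g_surj.
rewrite (bigID (fun i => g i)) /= [X in _ + X]big1 ?addr0 => [|i]; last by case: (g i).
rewrite (reindex_omap f g) => [|i]; last first.
  by case Ei: (g i) => [a|] //= _; rewrite (g_inj (fK a) Ei).
by apply: eq_big => [a|a _]; rewrite fK ?eqxx.
Qed.

Lemma embed_mx_row_id U i : g i = None -> row i (embed_mx U) = row i 1%:M.
Proof. by move=> gi; apply/rowP => j; rewrite !mxE gi. Qed.

Lemma embed_mx_col_id U j : g j = None -> col j (embed_mx U) = col j 1%:M.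
Proof. by move=> gj; apply/colP => i; rewrite !mxE gj; case: (g i). Qed.

Lemma embed_mx_orthogonal U :
  U^T *m U = 1%:M -> (embed_mx U)^T *m embed_mx U = 1%:M.
Proof.
move=> UU; set X := embed_mx U; apply/matrixP => i j.
case gj: (g j) => [b|]; last first.
  have XXj : col j (X^T *m X) = col j 1%:M.
    rewrite col_mulmx embed_mx_col_id // -col_mulmx mulmx1 -tr_row.
    by rewrite embed_mx_row_id // tr_row trmx1.
  by move/colP/(_ i): XXj; rewrite !mxE.
case gi: (g i) => [a|]; last first.
  have XXi : row i (X^T *m X) = row i 1%:M.
    rewrite row_mul -tr_col embed_mx_col_id // tr_col trmx1 -row_mul mul1mx.
    exact: embed_mx_row_id.
  by move/rowP/(_ j): XXi; rewrite !mxE.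
transitivity (\sum_l oapp (fun c => U c a * U c b) 0 (g l)).
  rewrite !mxE; apply: eq_bigr => l _; rewrite /X !mxE gi gj.
  case gl: (g l) => [c|] //=.
  have /negbTE -> : l != i by apply: contraTneq isT => li; move: gl; rewrite li gi.
  by rewrite mul0r.
have -> : (1%:M : 'M[R]_N) i j = (U^T *m U) a b.
  rewrite UU !mxE; congr (nat_of_bool _)%:R; apply/idP/idP => /eqP eq_ij; apply/eqP.
    by move: gi; rewrite eq_ij gj => -[].
  by apply: (g_inj gi); rewrite gj eq_ij.
by rewrite sum_oapp_partial_bij mxE; apply: eq_bigr => c _; rewrite mxE.
Qed.

End PartialEmbedding.

Section StaircaseProduct.
Variables (R : pzRingType) (N d : nat) (X : nat -> 'M[R]_N).
Hypothesis X_row_id : forall k (r : 'I_N),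
  (d <= r)%N -> r != (d + k).-1 :> nat -> row r (X k) = row r 1%:M.
Hypothesis X_col_id : forall k (c : 'I_N),
  (d <= c)%N -> c != (d + k).-1 :> nat -> col c (X k) = col c 1%:M.

Lemma col_big_mulmx_id (s : seq nat) (c : 'I_N) :
    (d <= c)%N -> {in s, forall k, c != (d + k).-1 :> nat} ->
  col c (\big[mulmx/1%:M]_(k <- s) X k) = col c 1%:M.
Proof.
move=> dc cs; rewrite big_seq.
apply: (big_ind (fun A => col c A = col c 1%:M)) => // [A B cA cB | k /cs].
  by rewrite col_mulmx cB -col_mulmx mulmx1.
exact: X_col_id.
Qed.

Lemma big_mulmx_lower j n (r c : 'I_N) :
  (d <= c < r)%N -> (\big[mulmx/1%:M]_(j <= k < n) X k) r c = 0.
Proof.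
move=> /andP[dc cr].
have /negbTE rc : r != c by apply: contraTneq cr => ->; rewrite ltnn.
have [t] := ubnP (n - j); elim: t j => // t IH j; rewrite ltnS => njt.
(* Row r of X j is that of 1 unless r = (d + j).-1; in that case no factor
   X k with k >= j touches column c < r. *)
case: (eqVneq (r : nat) (d + j).-1) => [rj | rj].
  have /colP/(_ r) : col c (\big[mulmx/1%:M]_(j <= k < n) X k) = col c 1%:M.
    apply: col_big_mulmx_id => // k; rewrite mem_index_iota => /andP[jk _].
    by rewrite neq_ltn (leq_trans cr) // rj; lia.
  by rewrite !mxE rc.
case: (ltnP j n) => [jn | nj]; last by rewrite big_geq // mxE rc.
rewrite big_ltn //.
have /rowP/(_ c) : row r (X j *m \big[mulmx/1%:M]_(j.+1 <= k < n) X k) =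
                   row r (\big[mulmx/1%:M]_(j.+1 <= k < n) X k).
  by rewrite row_mul X_row_id ?(ltnW (leq_ltn_trans dc cr)) // -row_mul mul1mx.
by rewrite !mxE => ->; apply: IH; lia.
Qed.

End StaircaseProduct.

Lemma vkidx_le d k i a : vkidx d k i = Some a -> (a <= d)%N.
Proof. by rewrite /vkidx; case: ltnP => [/ltnW di [<-] | _]; [|case: eqP => // _ [<-]]. Qed.

Lemma vkidx_SomeK d k i a :
  vkidx d k i = Some a -> i = if (a < d)%N then a else (d + k).-1.
Proof.
rewrite /vkidx; case: ltnP => [di [<-] | di]; first by rewrite di.
by case: eqP => // -> [<-]; rewrite ltnn.
Qed.

Lemma vkidx_inj d k i j a : vkidx d k i = Some a -> vkidx d k j = Some a -> i = j.
Proof. by move=> /vkidx_SomeK -> /vkidx_SomeK ->. Qed.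

Definition vkord d k {N} (i : 'I_N) : option 'I_d.+1 := obind insub (vkidx d k i).

Lemma vkord_Some d k N (i : 'I_N) a :
  vkord d k i = Some a -> vkidx d k i = Some (val a).
Proof. by rewrite /vkord; case: vkidx => [x|] //=; case: insubP => // u _ <- [->]. Qed.

Lemma vkord_None d k N (i : 'I_N) :
  (d <= i)%N -> i != (d + k).-1 :> nat -> vkord d k i = None.
Proof. by move=> di ik; rewrite /vkord /vkidx ltnNge di (negbTE ik). Qed.

Lemma vkord_inj d k N (i j : 'I_N) a :
  vkord d k i = Some a -> vkord d k j = Some a -> i = j.
Proof. by move=> /vkord_Some ei /vkord_Some ej; apply: val_inj; apply: vkidx_inj ei ej. Qed.

Lemma vkord_surj d n k : (0 < k < n)%N ->
  forall a : 'I_d.+1, exists i : 'I_(d.-1 + n), vkord d k i = Some a.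
Proof.
move=> kn a; case: (ltnP a d) => ad.
  have ai : (a < d.-1 + n)%N by lia.
  by exists (Ordinal ai); rewrite /vkord /vkidx /= ad /= valK.
have ai : ((d + k).-1 < d.-1 + n)%N by lia.
exists (Ordinal ai); rewrite /vkord /vkidx /= ltnNge (_ : d <= (d + k).-1)%N; last by lia.
rewrite eqxx /= -[X in insub X](_ : val a = d) ?valK //.
by apply/anti_leq; rewrite -ltnS ltn_ord ad.
Qed.

Section ReductionFactors.
Variable R : realType.

Lemma orthogonal_mx_gram n p (W : 'M[R]_n) (Y : 'M_(n, p)) :
  orthogonal_mx W -> (W *m Y)^T *m (W *m Y) = Y^T *m Y.
Proof. by move=> WW; rewrite trmx_mul -mulmxA (mulmxA W^T) WW mul1mx. Qed.

Lemma orthogonal_mx1 n : orthogonal_mx (1%:M : 'M[R]_n).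
Proof. by rewrite /orthogonal_mx trmx1 mulmx1. Qed.

Lemma orthogonal_mxM n (A B : 'M[R]_n) :
  orthogonal_mx A -> orthogonal_mx B -> orthogonal_mx (A *m B).
Proof. by move=> AA BB; rewrite /orthogonal_mx orthogonal_mx_gram. Qed.

Lemma Vk_embed d n k (U : 'M[R]_d.+1) : Vk n k U = embed_mx (vkord d k) U.
Proof.
apply/matrixP => i j; rewrite !mxE /vkord /mxe.
case Ei: (vkidx d k i) => [a|]; case Ej: (vkidx d k j) => [b|] //=; last by case: insub.
case: insubP => [a' _ _ | /negP[]]; last exact: vkidx_le Ei.
by case: insubP => [b' _ _ | /negP[]]; last exact: vkidx_le Ej.
Qed.

Lemma Vk_row_id d n k (U : 'M[R]_d.+1) (r : 'I_(d.-1 + n)) :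
  (d <= r)%N -> r != (d + k).-1 :> nat -> row r (Vk n k U) = row r 1%:M.
Proof. by move=> dr rk; rewrite Vk_embed embed_mx_row_id // vkord_None. Qed.

Lemma Vk_col_id d n k (U : 'M[R]_d.+1) (c : 'I_(d.-1 + n)) :
  (d <= c)%N -> c != (d + k).-1 :> nat -> col c (Vk n k U) = col c 1%:M.
Proof. by move=> dc ck; rewrite Vk_embed embed_mx_col_id // vkord_None. Qed.

Lemma Vk_orthogonal d n k (U : 'M[R]_d.+1) :
  (0 < k < n)%N -> orthogonal_mx U -> orthogonal_mx (Vk n k U).
Proof.
move=> kn UU; rewrite /orthogonal_mx Vk_embed.
by apply: embed_mx_orthogonal => //; [exact: vkord_inj | exact: vkord_surj].
Qed.

Lemma Vn_embed d n (U : 'M[R]_d) :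
  Vn n U = embed_mx (fun i : 'I_(d.-1 + n) => insub (val i)) U.
Proof.
apply/matrixP => i j; rewrite !mxE /mxe.
by case: (insubP 'I_d i) => [a -> _ | /negbTE ->];
   case: (insubP 'I_d j) => [b -> _ | /negbTE ->].
Qed.

Lemma Vn_col_id d n (U : 'M[R]_d) (c : 'I_(d.-1 + n)) :
  (d <= c)%N -> col c (Vn n U) = col c 1%:M.
Proof. by move=> dc; rewrite Vn_embed embed_mx_col_id // insubF // ltnNge dc. Qed.

Lemma Vn_orthogonal d n (U : 'M[R]_d) :
  (0 < n)%N -> orthogonal_mx U -> orthogonal_mx (Vn n U).
Proof.
move=> n0 UU; rewrite /orthogonal_mx Vn_embed; apply: embed_mx_orthogonal => //.
  move=> i j a ei ej; apply: val_inj.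
  by move: (insubK 'I_d (val i)) (insubK 'I_d (val j)); rewrite ei ej /= => <- <-.
move=> a; have ai : (a < d.-1 + n)%N by have := ltn_ord a; lia.
by exists (Ordinal ai); rewrite /= valK.
Qed.

Definition Pmat_scale n (gamma : R) : 'rV[R]_n :=
  \row_(j < n) if (j : nat) == 0%N then gamma else 1.

Lemma Pmat_factor n (gamma : R) : (1 < n)%N ->
  Pmat n gamma = colsub (@ordS n) 1%:M *m diag_mx (Pmat_scale n gamma).
Proof.
move=> n2; apply/matrixP => -[i ni] [j nj]; rewrite mul_mx_diag !mxE /=.
have -> : (Ordinal ni == ordS (Ordinal nj)) = (i == j.+1 %% n)%N by [].
have -> : (j.+1 %% n = if j == n.-1 then 0 else j.+1)%N.
  by case: eqP => [->|?]; [rewrite prednK ?modnn // ltnW | rewrite modn_small //; lia].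
case: (eqVneq j n.-1) => ?; case: (eqVneq i 0%N) => ?; case: (eqVneq i 1%N) => ?;
  case: (eqVneq j 0%N) => ?; case: (ltnP 1 i) => ?; case: (eqVneq j i.-1) => ?;
  case: (eqVneq i j.+1) => ?; rewrite /= ?mul1r ?mul0r ?mulr1 //; lia.
Qed.

Lemma Pmat_gram n (gamma : R) : (1 < n)%N ->
  (Pmat n gamma)^T *m Pmat n gamma = diag_mx (\row_j (Pmat_scale n gamma 0 j ^+ 2)).
Proof.
move=> n2; rewrite Pmat_factor // trmx_mul tr_diag_mx -mulmxA (mulmxA _^T).
rewrite colsub_inj_gram ?mul1mx ?mulmx_diag; last exact: ordS_inj.
by congr diag_mx; apply/rowP => j; rewrite !mxE expr2.
Qed.

Lemma Pmat_Crow_gram n (gamma : R) : (1 < n)%N -> `|gamma| <= 1 ->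
  (Pmat n gamma)^T *m Pmat n gamma + (Crow n gamma)^T *m Crow n gamma = 1%:M.
Proof.
move=> n2 g1; rewrite Pmat_gram //; apply/matrixP => i j; rewrite !mxE big_ord1 !mxE.
have g2 : gamma ^+ 2 <= 1 by rewrite -real_normK ?num_real // exprn_ile1.
case: (eqVneq i j) => [<- | ij] /=.
  case: eqP => _; rewrite ?mulr0 ?addr0 ?expr1n //.
  by rewrite -expr2 sqr_sqrtr ?subr_ge0 // addrC subrK.
rewrite mulr0n add0r; case: eqP => i0; case: eqP => j0; rewrite ?mulr0 ?mul0r //.
by case/eqP: ij; apply: ord_inj; rewrite i0 j0.
Qed.

End ReductionFactors.

Theorem corollary7p3 (R : realType) (n d : nat)
    (Theta : 'cV[R]_d -> Prop) (Vt : 'cV[R]_d -> 'M[R]_(d.+1))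
    (Phi : 'cV[R]_(d.-1) -> Prop) (Vd : 'cV[R]_(d.-1) -> 'M[R]_d)
    (gamma : R) (th : nat -> 'cV[R]_d) (ph : 'cV[R]_(d.-1)) :
  (2 <= n)%N -> (1 <= d)%N -> (d <= n)%N ->
  ORP (d.+1) (d.+1) Theta Vt -> ORP d d Phi Vd ->
  `|gamma| <= 1 ->
  (forall k, (1 <= k < n)%N -> Theta (th k)) -> Phi ph ->
  let M : 'M[R]_(d.-1 + n, n) :=
    (\big[@mulmx R _ _ _ / 1%:M]_(1 <= k < n) Vk n k (Vt (th k)))
      *m Vn n (Vd ph) *m col_mx 0 (Pmat n gamma) in
  HOON (dsubmx M) (col_mx (Crow n gamma) (usubmx M)).
Proof.
move=> n2 _ _ [VtO _] [VdO _] g1 thT phP M.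
pose B := \big[@mulmx R _ _ _ / 1%:M]_(1 <= k < n) Vk n k (Vt (th k)).
pose W := B *m Vn n (Vd ph).
have W_orth : orthogonal_mx W.
  apply: orthogonal_mxM; last by apply: Vn_orthogonal; [lia | exact: VdO].
  rewrite /B big_seq; apply: big_ind => [| |k]; first exact: orthogonal_mx1.
    exact: orthogonal_mxM.
  by rewrite mem_index_iota => kn; apply: Vk_orthogonal (VtO _ (thT k kn)).
have W_lower (r c : 'I_(d.-1 + n)) : (d <= c < r)%N -> W r c = 0.
  move=> /[dup] /andP[dc _] dcr.
  have /colP/(_ r) : col c W = col c B.
    by rewrite col_mulmx Vn_col_id // -col_mulmx mulmx1.
  rewrite !mxE => ->; apply: big_mulmx_lower dcr => k r'.
    exact: Vk_row_id.
  exact: Vk_col_id.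
have M_def : M = W *m col_mx 0 (Pmat n gamma) by [].
clearbody M W.
have M_factor : M = colsub (@ordS n) (rsubmx W) *m diag_mx (Pmat_scale n gamma).
  rewrite M_def -{1}[W]hsubmxK mul_row_col mulmx0 add0r Pmat_factor //.
  by rewrite mulmxA mulmx_colsub mulmx1.
split.
- move=> i j ji; rewrite M_factor mul_mx_diag !mxE W_lower ?mul0r //=.
  by rewrite modn_small; have := ltn_ord i; lia.
- move=> i j i0 j0; rewrite mxE; case: splitP => [? _ | ? ?]; last by lia.
  by rewrite !mxE eqn0Ngt j0.
- apply: gram_col_split.
  rewrite M_def orthogonal_mx_gram // tr_col_mx mul_row_col trmx0 mul0mx add0r.
  exact: Pmat_Crow_gram.
Qed.
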